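(* Let $H$ be a non-transitive $k$-vertex tournament. If there exists an $s$-vertex tournament $S$ with $s>k$ such that $n(H,S)\ge s^k\cdot 2^{-\binom{k}{2}}$, then $H$ is not quasirandom-forcing.
   Context: A tournament is an orientation of a complete graph; $\mathrm{Aut}(H)$ is its automorphism group. $n(H,S)$ denotes the number of $k$-element vertex subsets of $S$ that induce a tournament isomorphic to $H$. For tournaments $H,G$, $d(H,G)$ is the probability that $\lvert H\rvert$ uniformly random distinct vertices of $G$ induce a tournament isomorphic to $H$ (and $0$ if $\lvert H\rvert>\lvert G\rvert$). A sequence $(G_n)$ of tournaments with $\lvert G_n\rvert\to\infty$ is quasirandom if $\lim_{n\to\infty} d(F,G_n)=\frac{m!}{\lvert\mathrm{Aut}(F)\rvert}2^{-\binom{m}{2}}$ for every tournament $F$ with $m$ vertices. A $k$-vertex tournament $H$ is quasirandom-forcing if every sequence $(G_n)$ of tournaments with $\lvert G_n\rvert\to\infty$ and $\lim_{n\to\infty} d(H,G_n)=\frac{k!}{\lvert\mathrm{Aut}(H)\rvert}2^{-\binom{k}{2}}$ is quasirandom. *)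

From mathcomp Require Import all_boot.
From mathcomp Require Import perm.
From Stdlib Require Import Reals.

Set Implicit Arguments.
Unset Strict Implicit.
Unset Printing Implicit Defensive.

Record tournament (n : nat) := Tournament {
  tadj : rel 'I_n;
  tadj_irr : forall i, ~~ tadj i i;
  tadj_tot : forall i j, i != j -> tadj i j = ~~ tadj j i
}.

Definition transitive_tournament (k : nat) (H : tournament k) : Prop :=
  forall i j l : 'I_k, tadj H i j -> tadj H j l -> tadj H i l.

Definition aut_card (k : nat) (H : tournament k) : nat :=
  #|[set f : {perm 'I_k} | [forall i, [forall j, tadj H (f i) (f j) == tadj H i j]]]|.

Definition ncopies (k s : nat) (H : tournament k) (S : tournament s) : nat :=
  #|[set A : {set 'I_s} |
      [exists f : {ffun 'I_k -> 'I_s},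
         [&& injectiveb f, f @: setT == A &
             [forall i, [forall j, tadj H i j == tadj S (f i) (f j)]]]]]|.

Definition density (k n : nat) (H : tournament k) (G : tournament n) : R :=
  if (n < k)%N then 0%R
  else (INR (ncopies H G) / INR 'C(n, k))%R.

(* expected random density m!/|Aut F| * 2^{-C(m,2)} *)
Definition random_density (m : nat) (F : tournament m) : R :=
  (INR (m`!) / INR (aut_card F) * / (2 ^ 'C(m, 2)))%R.

Definition nat_to_infty (N : nat -> nat) : Prop :=
  forall M : nat, exists n0 : nat, forall n : nat, (n0 <= n)%N -> (M <= N n)%N.

Definition quasirandom (N : nat -> nat) (G : forall n, tournament (N n)) : Prop :=
  forall (m : nat) (F : tournament m),
    Un_cv (fun n => density F (G n)) (random_density F).

Definition quasirandom_forcing (k : nat) (H : tournament k) : Prop :=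
  forall (N : nat -> nat) (G : forall n, tournament (N n)),
    nat_to_infty N ->
    Un_cv (fun n => density H (G n)) (random_density H) ->
    quasirandom G.

From mathcomp Require Import all_boot perm zify.

(* Blow up S by replacing each vertex with a transitive tournament on n
   vertices.  A copy of H in S lifts to n^k copies in the blow-up, so the
   hypothesis n(H,S) >= s^k 2^-C(k,2) makes the density of H there at least
   k! 2^-C(k,2), hence at least its random density, while the transitive
   tournament on the same N = s n vertices has no copy of H.  Re-orienting the
   arcs one vertex at a time turns the latter into the former and moves the
   density of H by at most C(N,k-1)/C(N,k) = O(1/N) per step, so some
   intermediate tournament has H-density tending to the random one.  Each of
   these still contains a transitive block of N/s vertices, so the transitive
   tournament on m vertices keeps density at least (2s)^-m, which exceeds its
   random density m! 2^-C(m,2) once m is large. *)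

Set Implicit Arguments.
Unset Strict Implicit.
Unset Printing Implicit Defensive.

Section Copies.
Variables (k N : nat) (H : tournament k).

Definition embeds (G : tournament N) (A : {set 'I_N}) (f : {ffun 'I_k -> 'I_N}) :=
  [&& injectiveb f, f @: setT == A &
      [forall i, [forall j, tadj H i j == tadj G (f i) (f j)]]].

Definition copies (G : tournament N) : {set {set 'I_N}} :=
  [set A | [exists f, embeds G A f]].

Lemma ncopiesE G : ncopies H G = #|copies G|.
Proof. by []. Qed.

Lemma embedsP G A (f : {ffun 'I_k -> 'I_N}) :
  reflect [/\ injective f, f @: setT = A & forall i j, tadj H i j = tadj G (f i) (f j)]
          (embeds G A f).
Proof.
apply: (iffP and3P) => [[/injectiveP f_inj /eqP fA /forallP f_hom]|[f_inj fA f_hom]].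
  by split=> // i j; move/forallP: (f_hom i) => /(_ j)/eqP.
split; [exact/injectiveP | exact/eqP |].
by apply/forallP=> i; apply/forallP=> j; rewrite f_hom.
Qed.

Lemma copiesP G (A : {set 'I_N}) :
  reflect (exists f : {ffun 'I_k -> 'I_N}, [/\ injective f, f @: setT = A &
                         forall i j, tadj H i j = tadj G (f i) (f j)])
          (A \in copies G).
Proof.
by rewrite inE; apply: (iffP existsP) => -[f fA]; exists f; apply/embedsP.
Qed.

Lemma card_copy G (A : {set 'I_N}) : A \in copies G -> #|A| = k.
Proof. by case/copiesP=> f [f_inj <- _]; rewrite card_imset // cardsT card_ord. Qed.

Lemma copies_eq_on G1 G2 (A : {set 'I_N}) :
  {in A &, tadj G1 =2 tadj G2} -> A \in copies G1 -> A \in copies G2.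
Proof.
move=> G12 /copiesP[f [f_inj fA f_hom]]; apply/copiesP; exists f; split=> // i j.
have fA' x : f x \in A by rewrite -fA imset_f ?inE.
by rewrite f_hom G12 ?fA'.
Qed.

Lemma eq_density (G1 G2 : tournament N) : tadj G1 =2 tadj G2 -> density H G1 = density H G2.
Proof.
move=> G12; rewrite /density !ncopiesE.
suff -> : copies G1 = copies G2 by [].
by apply/setP=> A; apply/idP/idP; apply: copies_eq_on => x y _ _.
Qed.

Lemma copies_ordered_host_eq0 G :
  ~ transitive_tournament H -> (forall x y, tadj G x y = (x < y)) -> copies G = set0.
Proof.
move=> ntH G_ord; apply/setP=> A; rewrite in_set0; apply/negP => /copiesP[f [_ _ f_hom]].
by apply: ntH => i j l; rewrite !f_hom !G_ord; apply: ltn_trans.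
Qed.

End Copies.

Lemma card_draws_mem (T : finType) (v : T) k :
  #|[set A : {set T} | (v \in A) && (#|A| == k.+1)]| <= 'C(#|T|, k).
Proof.
set D := [set A | _].
have del_inj : {in D &, injective (fun A => A :\ v)}.
  by move=> A B; rewrite !inE => /andP[vA _] /andP[vB _] AB; rewrite -(setD1K vA) AB setD1K.
rewrite -card_draws -(card_in_imset del_inj).
apply/subset_leq_card/subsetP=> _ /imsetP[A + ->]; rewrite !inE => /andP[vA /eqP cA].
by move: cA; rewrite (cardsD1 v A) vA add1n => -[->].
Qed.

Lemma card_copies_change_at k N (H : tournament k.+1) (G1 G2 : tournament N) (v : 'I_N) :
  (forall x y, x != v -> y != v -> tadj G1 x y = tadj G2 x y) ->
  #|copies H G2| <= #|copies H G1| + 'C(N, k).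
Proof.
move=> G12; rewrite -[N in 'C(N, _)]card_ord.
apply: leq_trans (leq_add (leqnn _) (card_draws_mem v k)); set D := [set A | _].
apply: (@leq_trans #|copies H G1 :|: D|); last by rewrite cardsU leq_subr.
  apply/subset_leq_card/subsetP=> A A2.
  rewrite in_setU [A \in D]inE; case: (boolP (v \in A)) => vA.
    by rewrite (card_copy A2) eqxx orbT.
  apply/orP; left; apply: copies_eq_on A2 => x y xA yA.
  by rewrite G12 //; apply: contraNneq vA => <-.
Qed.

Lemma eq_tadj_lt N (P : pred 'I_N) (G1 G2 : tournament N) :
  (forall x y, P x -> P y -> x < y -> tadj G1 x y = tadj G2 x y) ->
  forall x y, P x -> P y -> tadj G1 x y = tadj G2 x y.
Proof.
move=> G12 x y Px Py; case: (ltngtP x y) => [xy | yx | /val_inj->].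
- exact: G12.
- have xy : x != y by rewrite neq_ltn yx orbT.
  by rewrite (tadj_tot G1 xy) (tadj_tot G2 xy) G12.
- by rewrite (negbTE (tadj_irr _ _)) (negbTE (tadj_irr _ _)).
Qed.

Section Orient.
Variables (N : nat) (r : rel 'I_N).

Definition orient_rel : rel 'I_N :=
  fun x y => if x < y then r x y else if y < x then ~~ r y x else false.

Lemma orient_irr (x : 'I_N) : ~~ orient_rel x x.
Proof. by rewrite /orient_rel ltnn. Qed.

Lemma orient_tot (x y : 'I_N) : x != y -> orient_rel x y = ~~ orient_rel y x.
Proof.
rewrite /orient_rel; case: ltngtP => [_ _ | _ _ | /val_inj-> ]; rewrite ?negbK ?eqxx //.
Qed.

Definition orient : tournament N := Tournament orient_irr orient_tot.

Lemma orient_lt (x y : 'I_N) : x < y -> tadj orient x y = r x y.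
Proof. by rewrite /= /orient_rel => ->. Qed.

End Orient.

Definition ordered_tournament m : tournament m := orient (fun _ _ => true).

Lemma ordered_tournamentE m (x y : 'I_m) : tadj (ordered_tournament m) x y = (x < y).
Proof. by rewrite /= /orient_rel; case: ltngtP. Qed.

Section Interpolation.
Variables (N : nat) (G : tournament N).

(* [interp t] agrees with [G] between vertices below [t] and orients every
   other arc towards its larger endpoint. *)
Definition interp (t : nat) : tournament N :=
  orient (fun x y : 'I_N => (t <= y) || tadj G x y).

Lemma interp0 (x y : 'I_N) : tadj (interp 0) x y = (x < y).
Proof. by rewrite -ordered_tournamentE. Qed.

Lemma interpN (x y : 'I_N) : tadj (interp N) x y = tadj G x y.
Proof.
apply: (@eq_tadj_lt _ predT) => // {}x {}y _ _ xy.
by rewrite /interp orient_lt // leqNgt ltn_ord.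
Qed.

Lemma interpS (v x y : 'I_N) :
  x != v -> y != v -> tadj (interp v) x y = tadj (interp v.+1) x y.
Proof.
apply: (@eq_tadj_lt _ (predC1 v)) => {}x {}y _ /= yv xy.
by move: yv; rewrite /orient_rel xy -val_eqE leq_eqVlt eq_sym => /negbTE ->.
Qed.

Lemma interp_ordered_on (P : pred 'I_N) t :
  (forall x y, P x -> P y -> tadj G x y = (x < y)) ->
  forall x y, P x -> P y -> tadj (interp t) x y = (x < y).
Proof.
move=> G_ord x y Px Py; rewrite -ordered_tournamentE; move: x y Px Py.
apply: eq_tadj_lt => x y Px Py xy.
by rewrite /interp orient_lt // G_ord // xy orbT ordered_tournamentE.
Qed.

End Interpolation.

Section Blowup.
Variables (s : nat) (S : tournament s) (n : nat).

Lemma part_lt (x : 'I_(s * n)) : x %/ n < s.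
Proof.
have n_gt0 : 0 < n by case: n x => [|//] [x]; rewrite muln0.
by rewrite ltn_divLR.
Qed.

Definition part (x : 'I_(s * n)) : 'I_s := Ordinal (part_lt x).

Definition blowup : tournament (s * n) :=
  orient (fun x y => (part x == part y) || tadj S (part x) (part y)).

Lemma blowup_same x y : part x = part y -> tadj blowup x y = (x < y).
Proof.
move=> xy; rewrite -ordered_tournamentE.
apply: (@eq_tadj_lt _ [pred z | part z == part y]) => /= [u w /eqP uy /eqP wy uw||//].
  by rewrite /orient_rel uw uy wy eqxx.
by rewrite xy.
Qed.

Lemma blowup_diff x y : part x != part y -> tadj blowup x y = tadj S (part x) (part y).
Proof.
move=> xy; have x_neq_y : x != y by apply: contraNneq xy => ->.
case: (ltngtP x y) => [lt | gt | /val_inj e]; last by rewrite e eqxx in x_neq_y.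
  by rewrite /blowup orient_lt // (negbTE xy).
rewrite (tadj_tot _ x_neq_y) /blowup orient_lt // eq_sym (negbTE xy) /=.
by rewrite -tadj_tot.
Qed.

Lemma vert_lt (a : 'I_s) (b : 'I_n) : a * n + b < s * n.
Proof. have := ltn_ord a; have := ltn_ord b; nia. Qed.

Definition vert a b : 'I_(s * n) := Ordinal (vert_lt a b).

Lemma part_vert a b : part (vert a b) = a.
Proof.
apply: val_inj => /=; rewrite divnMDl ?divn_small ?addn0 //.
by case: n b => [[]|].
Qed.

Lemma vert_inj a b a' b' : vert a b = vert a' b' -> a = a' /\ b = b'.
Proof.
move=> e; have aa' : a = a' by rewrite -(part_vert a b) e part_vert.
by split=> //; subst a'; apply: val_inj; move/(f_equal val): e => /= /addnI.
Qed.

Lemma card_vert_block a : #|[set vert a b | b : 'I_n]| = n.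
Proof. by rewrite card_imset ?cardsT ?card_ord // => b b' /vert_inj[]. Qed.

Lemma interp_blowup_block t a :
  {in [set vert a b | b : 'I_n] &, forall x y, tadj (interp blowup t) x y = (x < y)}.
Proof.
move=> x y /imsetP[b _ ->] /imsetP[b' _ ->].
have block_ord u w : part u == a -> part w == a -> tadj blowup u w = (u < w).
  by move=> /eqP ua /eqP wa; apply: blowup_same; rewrite ua wa.
by apply: (interp_ordered_on _ block_ord); rewrite part_vert.
Qed.

Variables (k : nat) (H : tournament k).

Lemma lift_embedding A f (g : {ffun 'I_k -> 'I_n}) :
  embeds H S A f -> [set vert (f i) (g i) | i in [set: 'I_k]] \in copies H blowup.
Proof.
move=> /embedsP[f_inj fA f_hom]; apply/copiesP.
exists [ffun i => vert (f i) (g i)]; split.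
- by move=> i j; rewrite !ffunE => /vert_inj[/f_inj].
- by apply: eq_imset => i; rewrite ffunE.
move=> i j; rewrite !ffunE; case: (eqVneq i j) => [->|ij].
  by rewrite !(negbTE (tadj_irr _ _)).
by rewrite blowup_diff !part_vert ?f_hom // (inj_eq f_inj).
Qed.

Lemma ncopies_blowup : ncopies H S * n ^ k <= ncopies H blowup.
Proof.
rewrite !ncopiesE; have [->|[A0 /copiesP[f0 _]]] := set_0Vmem (copies H S).
  by rewrite cards0.
pose emb A := odflt f0 [pick f | embeds H S A f].
have embP A : A \in copies H S -> embeds H S A (emb A).
  by rewrite inE /emb => /existsP[f fA]; case: pickP => [//|/(_ f)]; rewrite fA.
pose lift (Ag : {set 'I_s} * {ffun 'I_k -> 'I_n}) :=
  [set vert (emb Ag.1 i) (Ag.2 i) | i in [set: 'I_k]].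
have lift_inj : {in setX (copies H S) setT &, injective lift}.
  move=> [A g] [A' g']; rewrite !in_setX !in_setT /= !andbT => AS A'S e.
  have partE B h : B \in copies H S -> part @: lift (B, h) = B.
    case/embP/embedsP=> _ fB _; rewrite -[RHS]fB -imset_comp.
    by apply: eq_imset => i /=; rewrite part_vert.
  have AA' : A = A' by rewrite -(partE A g AS) e partE.
  subst A'; congr (_, _); apply/ffunP => i; have /embedsP[e_inj _ _] := embP A AS.
  have : vert (emb A i) (g i) \in lift (A, g') by rewrite -e; apply: imset_f.
  by case/imsetP => j _ /vert_inj[/e_inj ->].
have -> : #|copies H S| * n ^ k = #|setX (copies H S) [set: {ffun 'I_k -> 'I_n}]|.
  by rewrite cardsX cardsT card_ffun !card_ord.
rewrite -(card_in_imset lift_inj).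
apply/subset_leq_card/subsetP => _ /imsetP[[A g] + ->]; rewrite in_setX in_setT andbT => AS.
exact/lift_embedding/embP.
Qed.

End Blowup.

Lemma enum_val_ltE N (A : {set 'I_N}) (i j : 'I_#|A|) : (enum_val i < enum_val j) = (i < j).
Proof.
have enum_sorted : sorted (fun x y : 'I_N => x < y) (enum A).
  have -> : enum A = filter (mem A) (enum 'I_N) by rewrite enumT.
  apply: sorted_filter; first by move=> x y z; apply: ltn_trans.
  by rewrite -(sorted_map (f := val) (e' := ltn)) val_enum_ord iota_ltn_sorted.
have mono := sorted_ltn_nth (fun y x z : 'I_N => @ltn_trans y x z) (enum_val i) enum_sorted.
rewrite (enum_val_nth (enum_val i) i) (enum_val_nth (enum_val i) j).
have ltA (l : 'I_#|A|) : val l \in [pred m | m < size (enum A)] by rewrite inE -cardE ltn_ord.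
case: (ltngtP i j) => [ij | ji | /val_inj->]; last by rewrite !ltnn.
  exact: mono (ltA i) (ltA j) ij.
by apply/negbTE; rewrite -leqNgt ltnW // (mono _ _ (ltA j) (ltA i) ji).
Qed.

Lemma ordered_copy N (G : tournament N) (A : {set 'I_N}) :
  {in A &, forall x y, tadj G x y = (x < y)} ->
  A \in copies (ordered_tournament #|A|) G.
Proof.
move=> A_ord; apply/copiesP; exists [ffun i => enum_val i]; split.
- by move=> i j; rewrite !ffunE => /enum_val_inj.
- apply/eqP; rewrite eqEcard card_imset ?cardsT ?card_ord; last first.
    by move=> i j; rewrite !ffunE => /enum_val_inj.
  rewrite leqnn andbT; apply/subsetP => _ /imsetP[i _ ->]; rewrite ffunE.
  exact: enum_valP.
by move=> i j; rewrite ordered_tournamentE !ffunE A_ord ?enum_valP ?enum_val_ltE.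
Qed.

Lemma ncopies_ordered_block m N (G : tournament N) (B : {set 'I_N}) :
  {in B &, forall x y, tadj G x y = (x < y)} ->
  'C(#|B|, m) <= ncopies (ordered_tournament m) G.
Proof.
move=> B_ord; rewrite ncopiesE -cards_draws; apply/subset_leq_card/subsetP => A.
rewrite inE => /andP[AB /eqP <-]; apply: ordered_copy => x y xA yA.
by apply: B_ord; apply: (subsetP AB).
Qed.

Lemma leq_ffact_exp n k : n ^_ k <= n ^ k.
Proof.
elim: k => [|k IH]; first by rewrite ffactn0 expn0.
by rewrite ffactnSr expnSr leq_mul // leq_subr.
Qed.

Lemma leq_exp_ffact n k : (n - k) ^ k <= n ^_ k.
Proof.
elim: k => [//|k IH]; rewrite ffactnSr expnSr leq_mul ?leq_sub2l //.
apply: leq_trans IH; case: k => [|k]; first by rewrite !expn0.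
by rewrite leq_exp2r // leq_sub2l.
Qed.

Lemma leq_bin_exp n k : 'C(n, k) * k`! <= n ^ k.
Proof. by rewrite bin_ffact leq_ffact_exp. Qed.

Lemma leq_bin_scale c b N m :
  N <= c * b -> 2 * m <= b -> 'C(N, m) <= 'C(b, m) * (2 * c) ^ m.
Proof.
move=> Ncb mb; rewrite -(leq_pmul2r (fact_gt0 m)).
apply: leq_trans (leq_bin_exp _ _) _; rewrite mulnAC bin_ffact.
apply: leq_trans (_ : (2 * c * (b - m)) ^ m <= _).
  by case: m mb => [|m] mb; rewrite ?expn0 // leq_exp2r //; nia.
by rewrite expnMn mulnC leq_mul // leq_exp_ffact.
Qed.

Lemma leq_fact_exp m : m`! <= m ^ m.
Proof.
elim: m => [//|m IH]; rewrite factS expnS leq_mul //.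
by apply: leq_trans IH _; case: m => [|m]; rewrite ?expn0 ?leq_exp2r.
Qed.

Lemma linear_lt_exp2 j : 5 <= j -> 4 * j + 1 < 2 ^ j.
Proof.
elim: j => [//|j IH]; rewrite leq_eqVlt => /orP[/eqP <- //|j5].
by have := IH j5; rewrite expnS; have := expn_gt0 2 j; lia.
Qed.

(* The witness is m = 2^(c+5): then c^m m! <= m^(2m) and m^4 < 2^(m-1). *)
Lemma exists_exp_fact_lt_exp2_bin2 c : exists m, c ^ m * m`! < 2 ^ 'C(m, 2).
Proof.
pose j := c + 5; pose m := 2 ^ j; exists m.
have m_gt0 : 0 < m by rewrite expn_gt0.
have cm : c <= m by rewrite ltnW // (leq_trans (ltn_expl c (isT : 1 < 2))) ?leq_exp2l ?leq_addr.
have m4 : m ^ 4 < 2 ^ m.-1.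
  by rewrite /m -expnM ltn_exp2l //; have := linear_lt_exp2 (leq_addl c 5); rewrite /j; lia.
apply: (@leq_ltn_trans (m ^ m * m ^ m)); first by rewrite leq_mul ?leq_fact_exp ?leq_exp2r.
rewrite -(ltn_exp2r _ _ (isT : 0 < 2)).
have -> : (m ^ m * m ^ m) ^ 2 = (m ^ 4) ^ m by rewrite -expnD -!expnM; congr (_ ^ _); lia.
have -> : (2 ^ 'C(m, 2)) ^ 2 = (2 ^ m.-1) ^ m.
  by rewrite -!expnM mulnC -mul_bin_diag bin1 mulnC.
by rewrite ltn_exp2r.
Qed.

(* Imported only now: Reals rebinds [^] on [nat] to [Nat.pow], shadowing
   [expn]; below, natural powers are written [expn]. *)
From Stdlib Require Import Reals Lra.

Lemma INR_expn m n : INR (expn m n) = (INR m ^ n)%R.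
Proof. by elim: n => [//|n IH]; rewrite expnS mult_INR IH. Qed.

Lemma INR_gt0 n : 0 < n -> (0 < INR n)%R.
Proof. by move=> /ltP; apply: lt_0_INR. Qed.

Lemma INR_ltn m n : m < n -> (INR m < INR n)%R.
Proof. by move=> /ltP; apply: lt_INR. Qed.

Lemma INR_leq m n : m <= n -> (INR m <= INR n)%R.
Proof. by move=> /leP; apply: le_INR. Qed.

Lemma Rle_div_mul (a b c : R) : (0 < c -> a * c <= b -> a <= b / c)%R.
Proof.
move=> c_gt0 acb; apply: (Rmult_le_reg_r c) => //.
by rewrite /Rdiv Rmult_assoc Rinv_l ?Rmult_1_r //; lra.
Qed.

Lemma Rdiv_le_mul (a b c : R) : (0 < c -> a <= b * c -> a / c <= b)%R.
Proof.
move=> c_gt0 abc; apply: (Rmult_le_reg_r c) => //.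
by rewrite /Rdiv Rmult_assoc Rinv_l ?Rmult_1_r //; lra.
Qed.

Definition first_reach (rho : R) (f : nat -> R) (M : nat) : nat :=
  find (fun t => Rle_dec rho (f t) : bool) (iota 0 M.+1).

Lemma first_reach_close (f : nat -> R) (M : nat) (rho delta : R) :
  (f 0%nat < rho)%R -> (rho <= f M)%R ->
  (forall t, t < M -> (Rabs (f t.+1 - f t) <= delta)%R) ->
  (Rabs (f (first_reach rho f M) - rho) <= delta)%R.
Proof.
move=> f0 fM f_step; rewrite /first_reach; set P := fun t => _; set t := find P _.
have has_P : has P (iota 0 M.+1).
  by apply/hasP; exists M; [rewrite mem_iota add0n ltnSn | rewrite /P; case: Rle_dec].
have tM : t < M.+1 by rewrite -[M.+1](size_iota 0) -has_find.
have ft : (rho <= f t)%R.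
  by have := nth_find 0 has_P; rewrite nth_iota // add0n /P; case: Rle_dec.
case Et: t tM ft => [|t'] tM ft; first lra.
have ft' : (f t' < rho)%R.
  have bf := @before_find _ 0 P (iota 0 M.+1) t'; rewrite -/t Et in bf.
  move: (bf (ltnSn t')); rewrite nth_iota ?(ltn_trans _ tM) // add0n /P.
  by case: Rle_dec => // nle _; apply: Rnot_le_lt.
rewrite Rabs_pos_eq; last lra.
by have := f_step t' tM; have := Rle_abs (f t'.+1 - f t'); lra.
Qed.

Lemma first_reach_cv (f : nat -> nat -> R) (M : nat -> nat) (rho : R) (delta : nat -> R) :
  (forall n, f n 0%nat < rho)%R -> (forall n, rho <= f n (M n))%R ->
  (forall n t, t < M n -> (Rabs (f n t.+1 - f n t) <= delta n)%R) ->
  Un_cv delta 0 -> Un_cv (fun n => f n (first_reach rho (f n) (M n))) rho.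
Proof.
move=> f0 fM f_step delta0 eps eps_gt0; have [n0 delta_small] := delta0 eps eps_gt0.
exists n0 => n n0n; apply: Rle_lt_trans (first_reach_close (f0 n) (fM n) (f_step n)) _.
by have := delta_small n n0n; rewrite /R_dist Rminus_0_r; apply: Rle_lt_trans (Rle_abs _).
Qed.

Lemma bin_ratio_cv k (M : nat -> nat) :
  nat_to_infty M -> Un_cv (fun n => INR 'C(M n, k) / INR 'C(M n, k.+1))%R 0.
Proof.
move=> M_infty eps eps_gt0; have [K K_large] := INR_unbounded (INR k.+1 / eps).
have [n0 Mn0] := M_infty (k.+1 + K); exists n0 => n /leP/Mn0 MK.
rewrite /R_dist Rminus_0_r.
have C_gt0 : (0 < INR 'C(M n, k.+1))%R by apply/INR_gt0; rewrite bin_gt0; lia.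
have D_gt0 : (0 < INR (M n - k))%R by apply/INR_gt0; lia.
have ratioE : (INR 'C(M n, k) / INR 'C(M n, k.+1) = INR k.+1 / INR (M n - k))%R.
  have := congr1 INR (mul_bin_left (M n) k); rewrite !mult_INR => e.
  by field_simplify_eq; [lra | split; lra].
rewrite ratioE Rabs_pos_eq; last by apply: Rlt_le; apply: Rdiv_lt_0_compat => //; apply: INR_gt0.
have K_le : (INR K <= INR (M n - k))%R by apply: INR_leq; lia.
have k_lt : (INR k.+1 < INR (M n - k) * eps)%R.
  have := Rmult_lt_compat_r eps _ _ eps_gt0 K_large.
  rewrite /Rdiv Rmult_assoc Rinv_l ?Rmult_1_r; nra.
apply: (Rmult_lt_reg_r (INR (M n - k))) => //.
by rewrite /Rdiv Rmult_assoc Rinv_l ?Rmult_1_r; lra.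
Qed.

Lemma aut_card_gt0 k (H : tournament k) : 0 < aut_card H.
Proof.
rewrite /aut_card card_gt0; apply/set0Pn; exists 1%g; rewrite inE.
by apply/forallP=> i; apply/forallP=> j; rewrite !perm1.
Qed.

Lemma pow2_gt0 m : (0 < 2 ^ m)%R.
Proof. by apply: pow_lt; lra. Qed.

Lemma random_density_gt0 m (F : tournament m) : (0 < random_density F)%R.
Proof.
apply: Rmult_lt_0_compat; last exact/Rinv_0_lt_compat/pow2_gt0.
by apply: Rdiv_lt_0_compat; apply: INR_gt0; [apply: fact_gt0 | apply: aut_card_gt0].
Qed.

Lemma random_density_le m (F : tournament m) :
  (random_density F <= INR m`! * / 2 ^ 'C(m, 2))%R.
Proof.
apply: Rmult_le_compat_r; first exact/Rlt_le/Rinv_0_lt_compat/pow2_gt0.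
apply: Rdiv_le_mul; first exact/INR_gt0/aut_card_gt0.
have := INR_leq (aut_card_gt0 F); have := pos_INR m`!; rewrite /= => *; nra.
Qed.

Section Density.
Variables (k N : nat) (H : tournament k).

Lemma density_ordered_host_eq0 (G : tournament N) :
  ~ transitive_tournament H -> (forall x y, tadj G x y = (x < y)) -> density H G = 0%R.
Proof.
move=> ntH G_ord; rewrite /density ncopiesE copies_ordered_host_eq0 // cards0.
by case: ifP => // _; rewrite /Rdiv Rmult_0_l.
Qed.

Lemma density_ge_of_ncopies (G : tournament N) (c : R) :
  k <= N -> (0 <= c)%R -> (INR N ^ k * c <= INR (ncopies H G))%R ->
  (INR k`! * c <= density H G)%R.
Proof.
move=> kN c_ge0 many; rewrite /density ltnNge kN /=.
have C_gt0 : (0 < INR 'C(N, k))%R by apply: INR_gt0; rewrite bin_gt0.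
apply: Rle_div_mul => //; apply: Rle_trans many.
have := INR_leq (leq_bin_exp N k); rewrite mult_INR INR_expn => Ck.
by rewrite Rmult_comm -Rmult_assoc; apply: Rmult_le_compat_r.
Qed.

End Density.

(* When [N <= k] both densities vanish and the bound is [C(N,k) / 0 = 0]. *)
Lemma density_change_at k N (H : tournament k.+1) (G1 G2 : tournament N) (v : 'I_N) :
  (forall x y, x != v -> y != v -> tadj G1 x y = tadj G2 x y) ->
  (Rabs (density H G1 - density H G2) <= INR 'C(N, k) / INR 'C(N, k.+1))%R.
Proof.
move=> G12; rewrite /density !ncopiesE; case: ltnP => [Nk | kN].
  by rewrite Rminus_diag Rabs_R0 (bin_small Nk) /= /Rdiv Rinv_0 Rmult_0_r; lra.
have C_gt0 : (0 < INR 'C(N, k.+1))%R by apply: INR_gt0; rewrite bin_gt0.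
have := INR_leq (card_copies_change_at H G12).
have := INR_leq (card_copies_change_at H (fun x y xv yv => esym (G12 x y xv yv))).
rewrite !plus_INR => le21 le12.
rewrite -Rdiv_minus_distr /Rdiv Rabs_mult (Rabs_pos_eq (/ _)); last exact/Rlt_le/Rinv_0_lt_compat.
apply: Rmult_le_compat_r; first exact/Rlt_le/Rinv_0_lt_compat.
by apply: Rabs_le; lra.
Qed.

Lemma random_density_le_blowup k s n (H : tournament k) (S : tournament s) :
  0 < n -> k <= s -> (INR s ^ k * / 2 ^ 'C(k, 2) <= INR (ncopies H S))%R ->
  (random_density H <= density H (blowup S n))%R.
Proof.
move=> n_gt0 ks many; apply: Rle_trans (random_density_le H) _.
apply: density_ge_of_ncopies; first by apply: leq_trans ks (leq_pmulr _ n_gt0).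
  exact/Rlt_le/Rinv_0_lt_compat/pow2_gt0.
apply: Rle_trans (INR_leq (ncopies_blowup S n H)).
rewrite !mult_INR INR_expn Rpow_mult_distr Rmult_assoc (Rmult_comm (INR n ^ k)) -Rmult_assoc.
by apply: Rmult_le_compat_r => //; apply: pow_le; apply: pos_INR.
Qed.

Lemma density_ordered_block_ge N (G : tournament N) (B : {set 'I_N}) c m :
  {in B &, forall x y, tadj G x y = (x < y)} -> N <= c * #|B| -> 2 * m <= #|B| ->
  (/ INR (expn (2 * c) m) <= density (ordered_tournament m) G)%R.
Proof.
move=> B_ord NB mB; have BN : #|B| <= N by rewrite -[N in _ <= N]card_ord max_card.
have CN_gt0 : 0 < 'C(N, m) by rewrite bin_gt0; lia.
have scale := leq_bin_scale NB mB.
have /andP[CB_gt0 Q_gt0] : (0 < 'C(#|B|, m)) && (0 < expn (2 * c) m).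
  by rewrite -muln_gt0 (leq_trans CN_gt0 scale).
have mN : m <= N by lia.
rewrite /density ltnNge mN /=.
apply: Rle_div_mul; first exact: INR_gt0.
apply: Rle_trans (INR_leq (ncopies_ordered_block m B_ord)).
have := INR_leq scale; have := INR_gt0 Q_gt0; rewrite (mult_INR 'C(#|B|, m)) => Q_gt0' scale'.
apply: (Rmult_le_reg_l (INR (expn (2 * c) m))) => //.
by rewrite -Rmult_assoc Rinv_r ?Rmult_1_l; lra.
Qed.

Lemma random_density_ordered_lt c :
  0 < c -> exists m, (random_density (ordered_tournament m) < / INR (expn c m))%R.
Proof.
move=> c_gt0; have [m few] := exists_exp_fact_lt_exp2_bin2 c; exists m.
pose Q := INR (expn c m).
have Q_gt0 : (0 < Q)%R by apply: INR_gt0; rewrite expn_gt0 c_gt0.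
have P_gt0 := pow2_gt0 'C(m, 2).
have two : INR 2 = 2%R by rewrite /=; lra.
have := INR_ltn few; rewrite (mult_INR (expn _ _)) -/Q (INR_expn 2) two => few'.
apply: Rle_lt_trans (random_density_le _) _.
apply: (Rmult_lt_reg_r (Q * 2 ^ 'C(m, 2))); first exact: Rmult_lt_0_compat.
by field_simplify; lra.
Qed.

Lemma ordered_blocks_not_quasirandom c (N : nat -> nat) (G : forall n, tournament (N n))
    (B : forall n, {set 'I_(N n)}) :
  nat_to_infty (fun n => #|B n|) -> (forall n, N n <= c * #|B n|) ->
  (forall n, {in B n &, forall x y, tadj (G n) x y = (x < y)}) ->
  ~ quasirandom G.
Proof.
move=> B_infty NB B_ord G_qr.
have c_gt0 : 0 < 2 * c.
  have [n1 /(_ n1 (leqnn _)) B1] := B_infty 1.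
  by have := NB n1; have := max_card (B n1); rewrite card_ord; nia.
have [m rd_lt] := random_density_ordered_lt c_gt0.
set rd := random_density _ in rd_lt; set Q := INR _ in rd_lt.
have [n0 close] := G_qr m (ordered_tournament m) (/ Q - rd)%R ltac:(lra).
have [n1 large] := B_infty (2 * m); pose n := maxn n0 n1.
have := density_ordered_block_ge (B_ord n) (NB n) (large n (leq_maxr _ _)).
have := close n (leP (leq_maxl _ _)); rewrite /R_dist -/rd -/Q.
by have := Rle_abs (density (ordered_tournament m) (G n) - rd); lra.
Qed.

Theorem proposition4p1 (k : nat) (H : tournament k) :
  ~ transitive_tournament H ->
  (exists (s : nat) (S : tournament s),
      (k < s)%N /\
      (INR (ncopies H S) >= INR s ^ k * / 2 ^ 'C(k, 2))%R) ->
  ~ quasirandom_forcing H.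
Proof.
move=> ntH [s [S [ks /Rge_le many]]] forcing.
case: k H ntH ks many forcing => [H ntH | k H ntH ks many forcing]; first by case: ntH => -[].
have s_gt0 : 0 < s by apply: leq_trans ks.
pose N n := s * n.+1.
pose f n t := density H (interp (blowup S n.+1) t).
pose G n := interp (blowup S n.+1) (first_reach (random_density H) (f n) (N n)).
have N_infty : nat_to_infty N by move=> M; exists M => n Mn; rewrite /N; nia.
have G_cv : Un_cv (fun n => density H (G n)) (random_density H).
  apply: (@first_reach_cv f N _ _ _ _ _ (bin_ratio_cv k N_infty)) => [n | n | n t tN].
  - by rewrite /f density_ordered_host_eq0 //; [apply: random_density_gt0 | apply: interp0].
  - rewrite /f (eq_density _ (interpN _)).
    by apply: random_density_le_blowup => //; apply: ltnW.
  - apply: (@density_change_at _ _ H _ _ (Ordinal tN)) => x y xt yt.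
    by rewrite (interpS _ xt yt).
pose B n := [set vert (Ordinal s_gt0) b | b : 'I_n.+1].
apply: (ordered_blocks_not_quasirandom (c := s) (B := B)) (forcing N G N_infty G_cv).
- by move=> M; exists M => n Mn; rewrite card_vert_block leqW.
- by move=> n; rewrite card_vert_block.
- by move=> n; apply: interp_blowup_block.
Qed.
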